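(* Let $G$ be a connected graph and let $v(0)\in\mathbb R^n$ be arbitrary. Then for every $t\ge0$, $$\sqrt{\mathbb E\|v(t)-\bar v\|_2^2}\;\le\;\Big(1-\frac{1}{2\gamma(G)}\Big)^{t/2}\|\bar v-v(0)\|_2 .$$ Furthermore, for every $t\ge 0$, $$\sup_{\|v(0)\|_2=1}\sqrt{\mathbb E\|v(t)-\bar v\|_2^2}\;\ge\;\Big(1-\frac{1}{2\gamma(G)}\Big)^{t}.$$
   Context: Let $G=(V,E)$ be a finite, undirected, connected graph with $V=\{1,\dots,n\}$. The averaging process on $G$: the state vector $v(t)\in\mathbb R^n$, $t=0,1,2,\dots$, starts from a given $v(0)$; at each step $t\ge 1$ an edge $\{i,j\}\in E$ is chosen uniformly at random (independently of all previous choices) and both $v_i$ and $v_j$ are replaced by $(v_i+v_j)/2$, all other coordinates unchanged. Let $\bar v=(a,\dots,a)^T$ with $a=\frac1n\sum_i v_i(0)$. Let $L=D-A$ be the graph Laplacian ($D$ the diagonal degree matrix, $A$ the adjacency matrix), $\lambda_2(G)$ its second smallest eigenvalue, and $\gamma(G)=|E|/\lambda_2(G)$. *)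

From HB Require Import structures.
From mathcomp Require Import all_boot all_order all_algebra.
From mathcomp Require Import all_classical all_reals all_analysis.
Set Implicit Arguments. Unset Strict Implicit. Unset Printing Implicit Defensive.
Import Order.TTheory GRing.Theory Num.Theory.
Local Open Scope ring_scope.

Section Averaging.
Variables (R : realType) (n : nat).

(* A simple graph on V = 'I_n is a symmetric irreflexive relation e.
   Each undirected edge {i,j} is represented once, as the pair (i,j) with i < j. *)
Definition edges (e : rel 'I_n) : {set 'I_n * 'I_n} :=
  [set p : 'I_n * 'I_n | (p.1 < p.2)%N && e p.1 p.2].

Definition degree (e : rel 'I_n) (i : 'I_n) : nat := #|[set j | e i j]|.

Definition laplacian (e : rel 'I_n) : 'M[R]_n :=
  \matrix_(i, j) ((if i == j then (degree e i)%:R else 0)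
                  - (if e i j then 1 else 0)).

(* lam is the second smallest eigenvalue of the (real) matrix M, eigenvalues
   counted with multiplicity: the sorted list of all eigenvalues is s. *)
Definition is_lambda2 (M : 'M[R]_n) (lam : R) : Prop :=
  exists s : seq R, [/\ sorted <=%R s, size s = n,
    char_poly M = \prod_(x <- s) ('X - x%:P) & lam = s`_1].

Definition norm2 (v : 'cV[R]_n) : R := Num.sqrt (\sum_i v i 0 ^+ 2).

Definition avg_step (p : 'I_n * 'I_n) (v : 'cV[R]_n) : 'cV[R]_n :=
  \col_k (if (k == p.1) || (k == p.2) then (v p.1 0 + v p.2 0) / 2 else v k 0).

Definition traj (t : nat) (v0 : 'cV[R]_n) (s : {ffun 'I_t -> 'I_n * 'I_n}) :=
  foldl (fun w k => avg_step (s k) w) v0 (enum 'I_t).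

Definition vbar (v0 : 'cV[R]_n) : 'cV[R]_n :=
  const_mx ((\sum_i v0 i 0) / n%:R).

(* E ||v(t) - vbar||_2^2 : exact expectation over the |E|^t equally likely
   sequences of t independently uniformly chosen edges. *)
Definition exp_sqdist (e : rel 'I_n) (t : nat) (v0 : 'cV[R]_n) : R :=
  (\sum_(s : {ffun 'I_t -> 'I_n * 'I_n} | [forall k, s k \in edges e])
      norm2 (traj v0 s - vbar v0) ^+ 2) / (#|edges e|%:R ^+ t).

End Averaging.

From HB Require Import structures.
From mathcomp Require Import all_boot all_order all_algebra.
From mathcomp Require Import all_classical all_reals all_analysis.
From mathcomp Require Import ring lra.
Import Order.TTheory GRing.Theory Num.Theory.
Local Open Scope ring_scope.
Set Implicit Arguments. Unset Strict Implicit. Unset Printing Implicit Defensive.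

(* The averaging step is linear, fixes constant vectors and preserves the sum of the
   entries, so v(t) - vbar is the process started from z = v(0) - vbar, whose entries
   sum to zero.  Averaged over the |E| edges, one step maps w to (|E| - L/2) w and
   lowers |w|^2 by w^T L w / 2 >= lambda_2 |w|^2 / 2 (the Rayleigh bound for vectors
   summing to zero), hence E|v(t) - vbar|^2 <= (1 - lambda_2/(2|E|))^t |z|^2.  Started
   from a unit eigenvector x of lambda_2 summing to zero, the mean of v(t) is exactly
   (1 - lambda_2/(2|E|))^t x, and by Cauchy-Schwarz the mean square dominates the
   square of the mean, which gives the lower bound.
   The Rayleigh bound comes from Cayley-Hamilton: a real symmetric matrix is killed by
   the product of the A - r over its distinct eigenvalues r, which splits every vector
   into orthogonal eigencomponents. *)

Section DotProduct.
Variables (R : realFieldType) (n : nat).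
Implicit Types (x y z : 'cV[R]_n) (A : 'M[R]_n).

Definition dot x y : R := \sum_i x i 0 * y i 0.
Definition sumv x : R := \sum_i x i 0.

Lemma dotC x y : dot x y = dot y x.
Proof. by apply: eq_bigr => i _; rewrite mulrC. Qed.

Lemma dotDl x y z : dot (x + y) z = dot x z + dot y z.
Proof. by rewrite /dot -big_split; apply: eq_bigr => i _; rewrite mxE mulrDl. Qed.

Lemma dotZl a x y : dot (a *: x) y = a * dot x y.
Proof. by rewrite /dot mulr_sumr; apply: eq_bigr => i _; rewrite mxE mulrA. Qed.

Lemma dotNl x y : dot (- x) y = - dot x y.
Proof. by rewrite -scaleN1r dotZl mulN1r. Qed.

Lemma dotDr x y z : dot x (y + z) = dot x y + dot x z.
Proof. by rewrite dotC dotDl !(dotC x). Qed.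

Lemma dotZr a x y : dot x (a *: y) = a * dot x y.
Proof. by rewrite dotC dotZl dotC. Qed.

Lemma dotNr x y : dot x (- y) = - dot x y.
Proof. by rewrite dotC dotNl dotC. Qed.

Lemma dotBl x y z : dot (x - y) z = dot x z - dot y z.
Proof. by rewrite dotDl dotNl. Qed.

Lemma dotBr x y z : dot x (y - z) = dot x y - dot x z.
Proof. by rewrite dotC dotBl !(dotC x). Qed.

Lemma dot0r x : dot x 0 = 0.
Proof. by rewrite -(scale0r 0) dotZr mul0r. Qed.

Lemma dotxx x : dot x x = \sum_i x i 0 ^+ 2.
Proof. by apply: eq_bigr => i _; rewrite expr2. Qed.

Lemma dotxx_ge0 x : 0 <= dot x x.
Proof. by rewrite dotxx sumr_ge0 // => i _; rewrite sqr_ge0. Qed.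

Lemma dotxx_eq0 x : (dot x x == 0) = (x == 0).
Proof.
apply/eqP/eqP => [|->]; last exact: dot0r.
rewrite dotxx => /psumr_eq0P x0; apply/matrixP => i j; rewrite (ord1 j) mxE.
by apply/eqP; rewrite -sqrf_eq0 x0 // => k _; rewrite sqr_ge0.
Qed.

Lemma dotxx_gt0 x : x != 0 -> 0 < dot x x.
Proof. by rewrite lt_def dotxx_eq0 dotxx_ge0 andbT. Qed.

Lemma dot_mulmx A x y : A^T = A -> dot x (A *m y) = dot (A *m x) y.
Proof.
move=> symA; rewrite /dot.
under eq_bigr do rewrite mxE mulr_sumr.
under [RHS]eq_bigr do rewrite mxE mulr_suml.
rewrite exchange_big /=; apply: eq_bigr => i _; apply: eq_bigr => j _.
by rewrite -{1}symA mxE mulrCA mulrA.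
Qed.

Lemma sumvD x y : sumv (x + y) = sumv x + sumv y.
Proof. by rewrite /sumv -big_split; apply: eq_bigr => i _; rewrite mxE. Qed.

Lemma sumvZ a x : sumv (a *: x) = a * sumv x.
Proof. by rewrite /sumv mulr_sumr; apply: eq_bigr => i _; rewrite mxE. Qed.

Lemma sumvB x y : sumv (x - y) = sumv x - sumv y.
Proof. by rewrite sumvD -scaleN1r sumvZ mulN1r. Qed.

Lemma sumv_const a : sumv (const_mx a) = n%:R * a.
Proof.
by rewrite /sumv (eq_bigr (fun=> a)) => [|i _]; rewrite ?mxE // sumr_const card_ord mulr_natl.
Qed.

Lemma dot_constl a x : dot (const_mx a) x = a * sumv x.
Proof. by rewrite /dot mulr_sumr; apply: eq_bigr => i _; rewrite mxE. Qed.

Lemma sqr_sum_le (I : finType) (P : pred I) (b : I -> R) :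
  (\sum_(i | P i) b i) ^+ 2 <= #|P|%:R * \sum_(i | P i) b i ^+ 2.
Proof.
have sum_const c : \sum_(i | P i) c = #|P|%:R * c.
  by rewrite sumr_const mulr_natl.
have : 0 <= \sum_(i | P i) \sum_(j | P j) (b i - b j) ^+ 2.
  by do 2!apply: sumr_ge0 => ? _; rewrite sqr_ge0.
have -> : \sum_(i | P i) \sum_(j | P j) (b i - b j) ^+ 2 =
    2 * (#|P|%:R * \sum_(i | P i) b i ^+ 2 - (\sum_(i | P i) b i) ^+ 2).
  transitivity (\sum_(i | P i) (#|P|%:R * b i ^+ 2 + \sum_(j | P j) b j ^+ 2
                                  - 2 * b i * \sum_(j | P j) b j)).
    apply: eq_bigr => i _; rewrite -sum_const mulr_sumr -big_split -sumrB.
    by apply: eq_bigr => j _ /=; ring.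
  rewrite sumrB big_split /= -mulr_sumr sum_const -mulr_suml -mulr_sumr; ring.
by rewrite pmulr_rge0 // subr_ge0.
Qed.

Lemma dot_sum_le (I : finType) (P : pred I) (a : I -> 'cV[R]_n) :
  dot (\sum_(i | P i) a i) (\sum_(i | P i) a i) <=
  #|P|%:R * \sum_(i | P i) dot (a i) (a i).
Proof.
under [X in _ <= _ * X]eq_bigr do rewrite dotxx.
rewrite dotxx exchange_big mulr_sumr; apply: ler_sum => k _.
by rewrite summxE; apply: sqr_sum_le.
Qed.

End DotProduct.

Lemma trmx_mul_self_eq0 (R : realFieldType) p q (M : 'M[R]_(p, q)) :
  M^T *m M = 0 -> M = 0.
Proof.
move=> /matrixP MM; apply/matrixP => i j; rewrite mxE; apply/eqP.
have S0 : \sum_k M k j ^+ 2 = 0.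
  transitivity ((M^T *m M) j j); last by rewrite MM mxE.
  by rewrite mxE; apply: eq_bigr => k _; rewrite mxE expr2.
by rewrite -sqrf_eq0 (psumr_eq0P _ S0) // => k _; rewrite sqr_ge0.
Qed.

Lemma sym_mulmx_eq0 (R : realFieldType) n p (B : 'M[R]_n) (Z : 'M[R]_(n, p)) :
  B^T = B -> B *m (B *m Z) = 0 -> B *m Z = 0.
Proof.
move=> symB BBZ; apply: trmx_mul_self_eq0.
by rewrite trmx_mul symB -mulmxA BBZ mulmx0.
Qed.

Lemma sym_expmx_eq0 (R : realFieldType) m (B : 'M[R]_m.+1) k :
  B^T = B -> B ^+ k.+1 = 0 -> B = 0.
Proof.
move=> symB; elim: k => [|k IH] // Bk; apply: IH.
by rewrite exprS -mulmxE sym_mulmx_eq0 // !mulmxE -!exprS.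
Qed.

Section SymmetricMatrix.
Variables (R : realFieldType) (m : nat) (A : 'M[R]_m.+1).
Hypothesis symA : A^T = A.
Implicit Types (x y z w : 'cV[R]_m.+1) (p : {poly R}).

Lemma horner_mx_eigen p a x :
  A *m x = a *: x -> horner_mx A p *m x = p.[a] *: x.
Proof.
move=> Ax; elim/poly_ind: p => [|p c IH]; first by rewrite rmorph0 mul0mx horner0 scale0r.
rewrite rmorphD rmorphM /= horner_mx_X horner_mx_C -mulmxE mulmxDl -mulmxA Ax.
rewrite -scalemxAr IH mul_scalar_mx scalerA -scalerDl !hornerE.
by rewrite mulrC.
Qed.

Lemma horner_mx_sym p : (horner_mx A p)^T = horner_mx A p.
Proof.
elim/poly_ind: p => [|p c IH]; first by rewrite rmorph0 trmx0.
rewrite rmorphD rmorphM /= horner_mx_X horner_mx_C linearD /= tr_scalar_mx.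
rewrite -mulmxE trmx_mul symA IH mulmxE.
by have := comm_horner_mx2 A p 'X; rewrite horner_mx_X => ->.
Qed.

Lemma sym_eigenP a :
  reflect (exists2 x : 'cV_m.+1, A *m x = a *: x & x != 0) (root (char_poly A) a).
Proof.
rewrite -eigenvalue_root_char.
apply: (iffP eigenvalueP) => -[v Av v0]; exists v^T; rewrite ?trmx_eq0 //;
  by rewrite -{1}symA -trmx_mul Av linearZ.
Qed.

Lemma rayleigh_add_eigen y w a c : A *m y = a *: y -> dot w y = 0 ->
  c * dot w w <= dot w (A *m w) -> c * dot y y <= dot y (A *m y) ->
  c * dot (w + y) (w + y) <= dot (w + y) (A *m (w + y)).
Proof.
move=> Ay wy Hw Hy.
have yw : dot y w = 0 by rewrite dotC.
have wAy : dot w (A *m y) = 0 by rewrite Ay dotZr wy mulr0.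
have yAw : dot y (A *m w) = 0 by rewrite dot_mulmx // Ay dotZl yw mulr0.
rewrite mulmxDr !dotDl !dotDr wAy yAw wy yw !addr0 !add0r mulrDr.
exact: lerD.
Qed.

Variables (u : 'cV[R]_m.+1) (mu c : R) (s : seq R).
Hypotheses (Au : A *m u = mu *: u)
  (charA : char_poly A = \prod_(r <- s) ('X - r%:P))
  (small_eigen : forall a y, A *m y = a *: y -> dot u y = 0 -> a < c -> y = 0).

(* A real symmetric matrix is semisimple: the [m.+1]-th power of this product is a
   multiple of the characteristic polynomial, and a symmetric matrix with a vanishing
   power vanishes. *)
Lemma horner_mx_undup : horner_mx A (\prod_(r <- undup s) ('X - r%:P)) = 0.
Proof.
have size_s : size s = m.+1.
  by move: (size_char_poly A); rewrite charA size_prod_XsubC => -[].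
apply: (@sym_expmx_eq0 _ _ _ m); first exact: horner_mx_sym.
rewrite -rmorphXn -prodrXl.
have -> : \prod_(r <- undup s) ('X - r%:P) ^+ m.+1 = char_poly A *
    \prod_(r <- undup s) ('X - r%:P) ^+ (m.+1 - count_mem r s).
  rewrite charA -[\prod_(r <- s) _]prodr_undup_exp_count -big_split /=.
  apply: eq_bigr => r _.
  by rewrite -exprD subnKC // -size_s count_size.
by rewrite rmorphM /= Cayley_Hamilton mul0r.
Qed.

Lemma rayleigh_uniq rs : uniq rs -> forall z,
  horner_mx A (\prod_(r <- rs) ('X - r%:P)) *m z = 0 -> dot u z = 0 ->
  c * dot z z <= dot z (A *m z).
Proof.
elim: rs => [_ z|a rs IH /= /andP[ars urs] z].
  by rewrite big_nil rmorph1 mul1mx => -> _; rewrite mulmx0 !dot0r mulr0.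
set Q := horner_mx A (\prod_(r <- rs) ('X - r%:P)).
set k := (\prod_(r <- rs) ('X - r%:P)).[a].
have k0 : k != 0.
  by apply: contraNneq ars => k0; rewrite -root_prod_XsubC; apply/rootP.
rewrite big_cons rmorphM rmorphB /= horner_mx_X horner_mx_C -/Q -mulmxE -mulmxA.
rewrite mulmxBl mul_scalar_mx => /eqP; rewrite subr_eq0 => /eqP AQz uz.
(* [y] is the component of [z] in the eigenspace of [a]. *)
set y := k^-1 *: (Q *m z).
have Ay : A *m y = a *: y by rewrite -scalemxAr AQz !scalerA mulrC.
have Qw : Q *m (z - y) = 0.
  by rewrite mulmxBr (horner_mx_eigen _ Ay) scalerA divff // scale1r subrr.
have uQ x : dot u (Q *m x) = (\prod_(r <- rs) ('X - r%:P)).[mu] * dot u x.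
  by rewrite dot_mulmx ?horner_mx_sym // (horner_mx_eigen _ Au) dotZl.
have uy : dot u y = 0 by rewrite dotZr uQ uz !mulr0.
have wy : dot (z - y) y = 0.
  by rewrite dotC dotZl -dot_mulmx ?horner_mx_sym // Qw dot0r mulr0.
clearbody y; rewrite -[z](subrK y); apply: (rayleigh_add_eigen Ay wy).
  by apply: IH => //; rewrite dotBr uz uy subrr.
have [ac|ca] := ltP a c; first by rewrite (small_eigen Ay uy ac) mulmx0 !dot0r mulr0.
by rewrite Ay dotZr ler_wpM2r // dotxx_ge0.
Qed.

Lemma sym_rayleigh z : dot u z = 0 -> c * dot z z <= dot z (A *m z).
Proof. by apply: rayleigh_uniq (undup_uniq s) _ _; rewrite horner_mx_undup mul0mx. Qed.

End SymmetricMatrix.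

Section Laplacian.
Variables (R : realType) (n : nat) (e : rel 'I_n).
Hypotheses (sym_e : symmetric e) (irr_e : irreflexive e).
Local Notation L := (laplacian R e).
Implicit Types (x : 'cV[R]_n).

Lemma sum_edges_sym (G : 'I_n -> 'I_n -> R) :
  \sum_(p in edges e) (G p.1 p.2 + G p.2 p.1) =
  \sum_i \sum_j (if e i j then G i j else 0).
Proof.
have sum_edges (F : 'I_n * 'I_n -> R) : \sum_(p in edges e) F p =
    \sum_(i : 'I_n) \sum_(j : 'I_n) (if (i < j)%N && e i j then F (i, j) else 0).
  by rewrite pair_big /= big_mkcond; apply: eq_bigr => -[i j] _; rewrite inE.
rewrite big_split /= !sum_edges [X in _ + X]exchange_big -big_split /=.
apply: eq_bigr => i _; rewrite -big_split; apply: eq_bigr => j _ /=.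
rewrite [e j i]sym_e; case: (ltngtP i j) => [_|_|/val_inj ->]; rewrite ?andbF //=.
- by case: (e i j); rewrite addr0.
- by case: (e i j); rewrite add0r.
- by rewrite irr_e addr0.
Qed.

Definition energy x : R := \sum_(p in edges e) (x p.1 0 - x p.2 0) ^+ 2.

Lemma energy_ge0 x : 0 <= energy x.
Proof. by apply: sumr_ge0 => p _; rewrite sqr_ge0. Qed.

Lemma energy_eq0_edge x i j : energy x = 0 -> e i j -> x i 0 = x j 0.
Proof.
wlog lt_ij : i j / (i < j)%N.
  move=> wlog_ij x0 eij; case: (ltngtP i j) => [|lt_ji|/val_inj -> //].
    by move/wlog_ij; apply.
  by apply/esym/(wlog_ij j i); rewrite // sym_e.
move=> x0 eij; apply/eqP; rewrite -subr_eq0 -sqrf_eq0.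
by rewrite (@psumr_eq0P _ _ _ _ _ x0 (i, j)) ?inE ?lt_ij // => p _; rewrite sqr_ge0.
Qed.

Lemma laplacian_mulmx x i :
  (L *m x) i 0 = \sum_j (if e i j then x i 0 - x j 0 else 0).
Proof.
have degreeE : (degree e i)%:R = \sum_j (if e i j then 1 else 0 : R).
  by rewrite -big_mkcond /= sumr_const /degree cardsE.
transitivity (\sum_j ((if i == j then (degree e i)%:R * x i 0 else 0)
                      - (if e i j then x j 0 else 0))).
  rewrite mxE; apply: eq_bigr => j _; rewrite !mxE mulrBl.
  by case: (i =P j) => [<-|_]; case: (e i _); rewrite /= ?mul1r ?mul0r.
rewrite sumrB (bigD1 i) //= eqxx big1 ?addr0 => [|j]; last by rewrite eq_sym => /negbTE->.
rewrite degreeE mulr_suml -sumrB; apply: eq_bigr => j _.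
by case: (e i j); rewrite ?mul1r ?mul0r ?subr0.
Qed.

Lemma laplacian_sym : L^T = L.
Proof. by apply/matrixP => i j; rewrite !mxE sym_e eq_sym; case: eqP => // ->. Qed.

Lemma laplacian_const a : L *m (const_mx a : 'cV_n) = 0.
Proof.
apply/matrixP => i j; rewrite (ord1 j) laplacian_mulmx big1 ?mxE // => k _.
by rewrite !mxE subrr if_same.
Qed.

Lemma sumv_laplacian x : sumv (L *m x) = 0.
Proof.
rewrite /sumv; under eq_bigr do rewrite laplacian_mulmx.
rewrite -(sum_edges_sym (fun i j => x i 0 - x j 0)) big1 // => p _.
by rewrite addrC subrKA subrr.
Qed.

Lemma dot_laplacian x : dot x (L *m x) = energy x.
Proof.
rewrite /dot; under eq_bigr do rewrite laplacian_mulmx mulr_sumr.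
under eq_bigr do under eq_bigr do rewrite (fun_if (GRing.mul _)) mulr0.
rewrite -(sum_edges_sym (fun i j => x i 0 * (x i 0 - x j 0))).
by apply: eq_bigr => p _; ring.
Qed.

Hypothesis conn : forall i j, connect e i j.

Lemma energy_eq0_const x i j : energy x = 0 -> x i 0 = x j 0.
Proof.
move=> x0; have /connectP [p pth ->] := conn i j.
elim: p i pth => [|k p IH] i //= /andP [eik pth].
by rewrite (energy_eq0_edge x0 eik) IH.
Qed.

Lemma energy_eq0 x : energy x = 0 -> sumv x = 0 -> x = 0.
Proof.
move=> x0 sx; apply/matrixP => i j; rewrite (ord1 j) mxE.
have /eqP : sumv (const_mx (x i 0) : 'cV_n) = 0.
  by rewrite -sx; apply: eq_bigr => k _; rewrite mxE (energy_eq0_const k i x0).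
by rewrite sumv_const mulf_eq0 pnatr_eq0 eqn0Ngt (leq_ltn_trans _ (ltn_ord i)) //= => /eqP.
Qed.

End Laplacian.

Section AveragingStep.
Variables (R : realType) (n : nat).
Implicit Types (p : 'I_n * 'I_n) (v w : 'cV[R]_n).

Lemma sumB_update2 (f g : 'I_n -> R) i j : i != j ->
  (forall k, k != i -> k != j -> f k = g k) ->
  \sum_k f k - \sum_k g k = (f i - g i) + (f j - g j).
Proof.
move=> ij fg; rewrite -sumrB (bigD1 i) //= (bigD1 j) 1?eq_sym //=.
by rewrite big1 ?addr0 // => k /andP [ki kj]; rewrite fg ?subrr.
Qed.

Lemma avg_stepB p v w : avg_step p (v - w) = avg_step p v - avg_step p w.
Proof. by apply/matrixP => k j; rewrite !mxE; case: ifP => _; rewrite ?mxE //; field. Qed.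

Lemma avg_step_const p (a : R) : avg_step p (const_mx a) = const_mx a.
Proof. by apply/matrixP => k j; rewrite !mxE; case: ifP => _; rewrite ?mxE //; field. Qed.

Lemma sumv_avg_step p v : p.1 != p.2 -> sumv (avg_step p v) = sumv v.
Proof.
move=> p12; apply/eqP; rewrite -subr_eq0 (sumB_update2 p12) => [|k k1 k2];
  by rewrite !mxE ?(negbTE k1, negbTE k2) // !eqxx ?orbT /=; apply/eqP; field.
Qed.

Lemma dot_avg_step p v : p.1 != p.2 ->
  dot (avg_step p v) (avg_step p v) = dot v v - (v p.1 0 - v p.2 0) ^+ 2 / 2.
Proof.
move=> p12; rewrite !dotxx -[LHS](subrK (\sum_k v k 0 ^+ 2)).
rewrite (sumB_update2 p12) => [|k k1 k2];
  by rewrite !mxE ?(negbTE k1, negbTE k2) // !eqxx ?orbT /=; field.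
Qed.

Variable e : rel 'I_n.
Hypotheses (sym_e : symmetric e) (irr_e : irreflexive e).

Lemma edges_neq p : p \in edges e -> p.1 != p.2.
Proof. by rewrite inE => /andP [lt12 _]; rewrite neq_ltn lt12. Qed.

Lemma sum_avg_step v :
  \sum_(p in edges e) avg_step p v =
  #|edges e|%:R *: v - 2^-1 *: (laplacian R e *m v).
Proof.
apply/matrixP => k j; rewrite (ord1 j) summxE.
have -> : (#|edges e|%:R *: v - 2^-1 *: (laplacian R e *m v)) k 0 =
    #|edges e|%:R * v k 0 - 2^-1 * (laplacian R e *m v) k 0 by rewrite !mxE.
rewrite laplacian_mulmx //.
pose G a b := if k == a then (v b 0 - v a 0) / 2 else 0.
transitivity (\sum_(p in edges e) (v k 0 + (G p.1 p.2 + G p.2 p.1))).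
  apply: eq_bigr => p /edges_neq p12; rewrite mxE /G.
  have [->|k1] := eqVneq k p.1; first by rewrite (negbTE p12) /=; field.
  by have [->|k2] := eqVneq k p.2; rewrite /= ?addr0 //; field.
rewrite big_split /= sumr_const mulr_natl sum_edges_sym //; congr (_ + _).
rewrite (bigD1 k) //= [X in _ + X]big1 ?addr0 => [|i ik]; last first.
  by apply: big1 => b _; rewrite /G eq_sym (negbTE ik) if_same.
rewrite mulr_sumr -sumrN; apply: eq_bigr => b _; rewrite /G eqxx.
by case: (e k b); rewrite ?mulr0 ?oppr0 //; field.
Qed.

Lemma sum_dot_avg_step v :
  \sum_(p in edges e) dot (avg_step p v) (avg_step p v) =
  #|edges e|%:R * dot v v - energy e v / 2.
Proof.
under eq_bigr => p /edges_neq p12 do rewrite dot_avg_step //.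
by rewrite sumrB sumr_const mulr_natl -mulr_suml.
Qed.

End AveragingStep.

Section EdgeSequences.
Variables (T : finType) (D : {pred T}).

Definition ffun_rcons t (s : {ffun 'I_t -> T}) (x : T) : {ffun 'I_t.+1 -> T} :=
  [ffun k => if unlift ord_max k is Some k' then s k' else x].

Lemma ffun_rcons_widen t s x (k : 'I_t) :
  ffun_rcons s x (widen_ord (leqnSn t) k) = s k.
Proof.
have -> : widen_ord (leqnSn t) k = lift ord_max k by apply: ord_inj; rewrite lift_max.
by rewrite ffunE liftK.
Qed.

Lemma ffun_rcons_max t s x : @ffun_rcons t s x ord_max = x.
Proof. by rewrite ffunE unlift_none. Qed.

Lemma card_ffun_in t : #|[pred s : {ffun 'I_t -> T} | [forall k, s k \in D]]| = (#|D| ^ t)%N.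
Proof. by rewrite -[in RHS](card_ord t) -card_ffun_on; apply: eq_card => s; rewrite !inE. Qed.

Lemma big_ffun_rcons (V : zmodType) t (F : {ffun 'I_t.+1 -> T} -> V) :
  \sum_(s : {ffun 'I_t.+1 -> T} | [forall k, s k \in D]) F s =
  \sum_(s : {ffun 'I_t -> T} | [forall k, s k \in D]) \sum_(x in D) F (ffun_rcons s x).
Proof.
pose restr (s : {ffun 'I_t.+1 -> T}) := [ffun k => s (widen_ord (leqnSn t) k)].
rewrite pair_big /= (reindex (fun sx => ffun_rcons sx.1 sx.2)) /=; last first.
  exists (fun s => (restr s, s ord_max)) => [[s x] _|s _] /=.
    by rewrite ffun_rcons_max; congr (_, _); apply/ffunP => k; rewrite ffunE ffun_rcons_widen.
  apply/ffunP => k; rewrite ffunE; case: unliftP => [j ->|-> //].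
  by rewrite ffunE; congr (s _); apply: ord_inj; rewrite lift_max.
apply: eq_bigl => -[s x] /=; apply/forallP/andP => [Hs|[/forallP Hs Hx] k].
  split; last by have := Hs ord_max; rewrite ffun_rcons_max.
  by apply/forallP => k; have := Hs (widen_ord (leqnSn t) k); rewrite ffun_rcons_widen.
by rewrite ffunE; case: unliftP => [j _|_] //; apply: Hs.
Qed.

End EdgeSequences.

Section Trajectories.
Variables (R : realType) (n : nat).
Implicit Types (v w : 'cV[R]_n).

Lemma traj0 v (s : {ffun 'I_0 -> 'I_n * 'I_n}) : traj v s = v.
Proof. by rewrite /traj enum_ord0. Qed.

Lemma traj_rcons t v (s : {ffun 'I_t -> 'I_n * 'I_n}) p :
  traj v (ffun_rcons s p) = avg_step p (traj v s).
Proof.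
rewrite /traj enum_ordSr foldl_rcons ffun_rcons_max; congr avg_step.
by elim: (enum 'I_t) v => //= k l IH v; rewrite ffun_rcons_widen IH.
Qed.

Lemma trajB t v w (s : {ffun 'I_t -> 'I_n * 'I_n}) :
  traj (v - w) s = traj v s - traj w s.
Proof. by rewrite /traj; elim: (enum 'I_t) v w => //= k l IH v w; rewrite avg_stepB IH. Qed.

Lemma traj_const t (a : R) (s : {ffun 'I_t -> 'I_n * 'I_n}) :
  traj (const_mx a) s = const_mx a.
Proof. by rewrite /traj; elim: (enum 'I_t) => //= k l; rewrite avg_step_const. Qed.

Variable e : rel 'I_n.

Lemma sumv_traj t v (s : {ffun 'I_t -> 'I_n * 'I_n}) :
  [forall k, s k \in edges e] -> sumv (traj v s) = sumv v.
Proof.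
move=> /forallP Es; rewrite /traj.
by elim: (enum 'I_t) v => //= k l IH v; rewrite IH sumv_avg_step // (@edges_neq _ e).
Qed.

Lemma sum_traj_rcons (V : zmodType) t v (F : 'cV[R]_n -> V) :
  \sum_(s : {ffun 'I_t.+1 -> 'I_n * 'I_n} | [forall k, s k \in edges e]) F (traj v s) =
  \sum_(s : {ffun 'I_t -> 'I_n * 'I_n} | [forall k, s k \in edges e])
    \sum_(p in edges e) F (avg_step p (traj v s)).
Proof.
rewrite big_ffun_rcons; apply: eq_bigr => s _; apply: eq_bigr => p _.
by rewrite traj_rcons.
Qed.

End Trajectories.

Lemma char_poly_mulmx_eq0 (R : comNzRingType) n (A B : 'M[R]_n) : A *m B = 0 ->
  char_poly A * char_poly B = 'X ^+ n * char_poly (A + B).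
Proof.
move=> AB0; rewrite /char_poly -detZ -det_mulmx; congr (\det _).
rewrite /char_poly_mx mulmxBl !mulmxBr mul_scalar_mx mul_mx_scalar -map_mxM AB0.
rewrite map_mx0 subr0 map_mxD scalerBr scalerDr mul_scalar_mx.
by rewrite -!addrA; congr (_ + _); rewrite opprD addrC.
Qed.

Lemma sorted_lt_nth1_le (R : realDomainType) (s : seq R) r x :
  sorted <=%R s -> r \in s -> x \in s -> r < s`_1 -> r <= x.
Proof.
move=> s_sorted rs xs r_lt; have le_nth := sorted_leq_nth le_trans lexx 0 s_sorted.
have xi : (index x s < size s)%N by rewrite index_mem.
have ri : (index r s < size s)%N by rewrite index_mem.
rewrite -(nth_index 0 xs) -(nth_index 0 rs) in r_lt *.
move: (index r s) ri r_lt => [|i] ri r_lt; first by apply: le_nth; rewrite ?inE.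
suff : s`_1 <= s`_i.+1 by rewrite leNgt r_lt.
by apply: le_nth; rewrite ?inE // (leq_ltn_trans _ ri).
Qed.

Definition ones_col0 (R : nzRingType) m : 'M[R]_m.+1 := \matrix_(i, j) (j == ord0)%:R.

Lemma char_poly_ones_col0 (R : comNzRingType) m :
  char_poly (ones_col0 R m) = ('X - 1) * 'X ^+ m.
Proof.
rewrite char_poly_trig; last first.
  by apply/is_trig_mxP => i j ij; rewrite mxE -val_eqE /= gtn_eqF // (leq_ltn_trans _ ij).
rewrite big_ord_recl mxE eqxx; congr (_ * _).
rewrite (eq_bigr (fun=> 'X)) ?prodr_const ?card_ord // => i _.
by rewrite mxE -val_eqE /= subr0.
Qed.

Section LaplacianSpectrum.
Variables (R : realType) (m : nat) (e : rel 'I_m.+1).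
Hypotheses (sym_e : symmetric e) (irr_e : irreflexive e)
  (conn : forall i j, connect e i j).
Local Notation L := (laplacian R e).
Variable s : seq R.
Hypotheses (s_sorted : sorted <=%R s)
  (char_L : char_poly L = \prod_(r <- s) ('X - r%:P)).

Lemma size_spectrum : size s = m.+1.
Proof. by move: (size_char_poly L); rewrite char_L size_prod_XsubC => -[]. Qed.

Lemma root_spectrum_nth i : (i < m.+1)%N -> root (char_poly L) s`_i.
Proof. by move=> im; rewrite char_L root_prod_XsubC mem_nth // size_spectrum. Qed.

Lemma root_laplacian_ge0 a : root (char_poly L) a -> 0 <= a.
Proof.
move=> /(sym_eigenP (laplacian_sym R sym_e)) [x Lx x0].
have := energy_ge0 e x; rewrite -dot_laplacian // Lx dotZr.
by rewrite pmulr_lge0 // dotxx_gt0.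
Qed.

Lemma mem_spectrum0 : 0 \in s.
Proof.
rewrite -root_prod_XsubC -char_L; apply/(sym_eigenP (laplacian_sym R sym_e)).
exists (const_mx 1); first by rewrite laplacian_const scale0r.
by apply/eqP => /matrixP/(_ 0 0); rewrite !mxE => /eqP; rewrite oner_eq0.
Qed.

Lemma laplacian_rayleigh z : sumv z = 0 -> s`_1 * dot z z <= energy e z.
Proof.
have L1 : L *m (const_mx 1 : 'cV_m.+1) = 0 *: const_mx 1 by rewrite laplacian_const scale0r.
rewrite -dot_laplacian // -[sumv z]mul1r -dot_constl.
apply: (sym_rayleigh (laplacian_sym R sym_e) L1 char_L).
move=> a y Ly; rewrite dot_constl mul1r => y0 a_lt; apply/eqP; apply: contraT => y_neq0.
have /(sorted_lt_nth1_le s_sorted) a_le : a \in s.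
  by rewrite -root_prod_XsubC -char_L; apply/(sym_eigenP (laplacian_sym R sym_e)); exists y.
have Ey : energy e y = 0.
  apply/eqP; rewrite eq_le energy_ge0 andbT -dot_laplacian // Ly dotZr.
  by rewrite pmulr_lle0 ?dotxx_gt0 // a_le // mem_spectrum0.
by rewrite (energy_eq0 sym_e conn Ey y0) eqxx in y_neq0.
Qed.

Lemma laplacian_add_ones_col0_unit : \det (L + ones_col0 R m) != 0.
Proof.
rewrite -det_tr; apply/det0P => -[v v0 vLM].
have /eqP : (L + ones_col0 R m) *m v^T = 0 by rewrite -[_ + _]trmxK -trmx_mul vLM trmx0.
rewrite mulmxDl addr_eq0 => /eqP Lx.
have Mx : ones_col0 R m *m v^T = const_mx (v^T 0 0).
  apply/matrixP => i j; rewrite (ord1 j) !mxE (bigD1 0) //= big1 ?mxE ?eqxx ?mul1r ?addr0 //.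
  by move=> k k0; rewrite mxE (negbTE k0) mul0r.
have x00 : v^T 0 0 = 0.
  have := sumv_laplacian sym_e irr_e v^T; rewrite Lx Mx -scaleN1r sumvZ sumv_const.
  by move/eqP; rewrite mulf_eq0 oppr_eq0 oner_eq0 mulf_eq0 pnatr_eq0 /= => /eqP.
have Ex : energy e v^T = 0.
  by rewrite -dot_laplacian // Lx Mx x00 oppr0 dot0r.
apply: (negP v0); rewrite -trmx_eq0; apply/eqP/matrixP => i j.
by rewrite (ord1 j) (energy_eq0_const sym_e conn i 0 Ex) x00 mxE.
Qed.

Lemma laplacian_mul_ones_col0 : L *m ones_col0 R m = 0.
Proof.
apply/matrixP => i j; rewrite !mxE.
have row0 : \sum_k laplacian R e i k = 0.
  move/matrixP/(_ i 0): (laplacian_const e (1 : R)); rewrite !mxE.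
  by under eq_bigr do rewrite [const_mx _ _ _]mxE mulr1.
transitivity ((\sum_k L i k) * (j == ord0)%:R); last by rewrite row0 mul0r.
by rewrite mulr_suml; apply: eq_bigr => k _; rewrite [ones_col0 _ _ _ _]mxE.
Qed.

(* As [L *m M = 0] for [M := ones_col0 R m], [char L * char M = 'X ^+ m.+1 * char (L + M)];
   a double root 0 of [char L] would then make [L + M] singular. *)
Lemma laplacian_lambda2_gt0 : (0 < m)%N -> 0 < s`_1.
Proof.
move=> m_gt0; rewrite lt_def root_laplacian_ge0 ?root_spectrum_nth // andbT.
apply/eqP => s1_0.
have s0_0 : s`_0 = 0.
  apply/eqP; rewrite eq_le root_laplacian_ge0 ?root_spectrum_nth // andbT -[X in _ <= X]s1_0.
  by apply: (sorted_leq_nth le_trans lexx 0 s_sorted); rewrite ?inE ?size_spectrum.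
have [a [b [s' Es]]] : exists a b s', s = [:: a, b & s'].
  case: s (size_spectrum) => [|a [|b s']] // [m0]; last by exists a, b, s'.
  by rewrite -m0 in m_gt0.
rewrite Es /= in s0_0 s1_0; move: char_L; rewrite Es !big_cons s0_0 s1_0 subr0 => charL.
have XmN0 : 'X ^+ m.+1 != 0 :> {poly R} by rewrite expf_neq0 // polyX_eq0.
have : 'X ^+ m.+1 * ('X * (\prod_(r <- s') ('X - r%:P) * ('X - 1))) =
    'X ^+ m.+1 * char_poly (L + ones_col0 R m).
  rewrite -char_poly_mulmx_eq0 ?laplacian_mul_ones_col0 //.
  by rewrite charL char_poly_ones_col0 exprS; ring.
move=> /(mulfI XmN0)/(congr1 (fun p : {poly R} => p`_0)); rewrite coefXM eqxx char_poly_det.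
move=> /esym/eqP; rewrite mulf_eq0 signr_eq0 /= => /eqP det0.
by move: laplacian_add_ones_col0_unit; rewrite det0 eqxx.
Qed.

Lemma fiedler_vector : (0 < m)%N ->
  exists x, [/\ L *m x = s`_1 *: x, sumv x = 0 & dot x x = 1].
Proof.
move=> m_gt0; have lam_gt0 := laplacian_lambda2_gt0 m_gt0.
have [y Ly y0] := sym_eigenP (laplacian_sym R sym_e) _ (@root_spectrum_nth 1 m_gt0).
have sy : sumv y = 0.
  move: (sumv_laplacian sym_e irr_e y); rewrite Ly sumvZ => /eqP.
  by rewrite mulf_eq0 gt_eqF //= => /eqP.
exists ((Num.sqrt (dot y y))^-1 *: y); split.
- by rewrite -scalemxAr Ly !scalerA mulrC.
- by rewrite sumvZ sy mulr0.
rewrite dotZl dotZr mulrA -expr2 exprVn sqr_sqrtr ?dotxx_ge0 //.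
by rewrite mulVf // gt_eqF // dotxx_gt0.
Qed.

End LaplacianSpectrum.

Lemma sqr_norm2 (R : realType) n (w : 'cV[R]_n) : norm2 w ^+ 2 = dot w w.
Proof. by rewrite /norm2 -dotxx sqr_sqrtr // dotxx_ge0. Qed.

Lemma norm2E (R : realType) n (w : 'cV[R]_n) : norm2 w = Num.sqrt (dot w w).
Proof. by rewrite /norm2 dotxx. Qed.

Section Moments.
Variables (R : realType) (n : nat) (e : rel 'I_n).
Hypotheses (sym_e : symmetric e) (irr_e : irreflexive e).
Local Notation L := (laplacian R e).
Local Notation N := (#|edges e|%:R : R).

Lemma sum_traj_eigen t x lam : L *m x = lam *: x ->
  \sum_(s : {ffun 'I_t -> 'I_n * 'I_n} | [forall k, s k \in edges e]) traj x s =
  (N - lam / 2) ^+ t *: x.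
Proof.
move=> Lx; elim: t => [|t IH].
  by under eq_bigr do rewrite traj0; rewrite sumr_const card_ffun_in expr0 scale1r.
rewrite (sum_traj_rcons e t x id); under eq_bigr do rewrite sum_avg_step //.
rewrite sumrB -!scaler_sumr -mulmx_sumr IH -scalemxAr Lx !scalerA -scalerBl.
by congr (_ *: _); rewrite exprS; field.
Qed.

Lemma sum_sqnorm_traj_le t z lam :
  (forall y, sumv y = 0 -> lam * dot y y <= energy e y) -> lam / 2 <= N ->
  sumv z = 0 ->
  \sum_(s : {ffun 'I_t -> 'I_n * 'I_n} | [forall k, s k \in edges e])
    dot (traj z s) (traj z s) <= (N - lam / 2) ^+ t * dot z z.
Proof.
move=> rayleigh lam_le sz; elim: t => [|t IH].
  by under eq_bigr do rewrite traj0; rewrite sumr_const card_ffun_in expr0 mul1r.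
rewrite (sum_traj_rcons e t z (fun w => dot w w)) exprS -mulrA.
apply: le_trans (ler_wpM2l _ IH); last by rewrite subr_ge0.
rewrite mulr_sumr; apply: ler_sum => s Es; rewrite sum_dot_avg_step //.
have := rayleigh (traj z s); rewrite (sumv_traj _ Es) sz => /(_ erefl); lra.
Qed.

Lemma rayleigh_le_edges x lam :
  L *m x = lam *: x -> dot x x = 1 -> lam / 2 <= N.
Proof.
move=> Lx x1; have : 0 <= \sum_(p in edges e) dot (avg_step p x) (avg_step p x).
  by apply: sumr_ge0 => p _; apply: dotxx_ge0.
by rewrite sum_dot_avg_step // -dot_laplacian // Lx dotZr x1 !mulr1 subr_ge0.
Qed.

End Moments.

Lemma powR_half (R : realType) (a : R) t : 0 <= a -> a `^ (t%:R / 2) = Num.sqrt (a ^+ t).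
Proof. by move=> a0; rewrite powRrM powR_mulrn // powR12_sqrt // exprn_ge0. Qed.

Section ExpectedSquaredDistance.
Variables (R : realType) (m : nat) (e : rel 'I_m.+1).
Hypotheses (sym_e : symmetric e) (irr_e : irreflexive e).
Local Notation L := (laplacian R e).
Local Notation N := (#|edges e|%:R : R).
Implicit Types (v x : 'cV[R]_m.+1).

Lemma sumv_sub_vbar v : sumv (v - vbar v) = 0.
Proof. by rewrite sumvB sumv_const mulrC divfK ?subrr // pnatr_eq0. Qed.

Lemma vbar_sumv0 v : sumv v = 0 -> vbar v = 0.
Proof. by move=> sv; apply/matrixP => i j; rewrite !mxE -/(sumv v) sv mul0r. Qed.

Lemma norm2_sub_vbar_le v : norm2 (vbar v - v) <= norm2 v.
Proof.
have cz : dot (vbar v) (v - vbar v) = 0 by rewrite dot_constl sumv_sub_vbar mulr0.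
rewrite dotBr in cz.
rewrite !norm2E ler_wsqrtr // -opprB dotNl dotNr opprK !dotBl !dotBr (dotC v).
by have := dotxx_ge0 (vbar v); lra.
Qed.

Lemma exp_sqdistE t v : exp_sqdist e t v =
  (\sum_(s : {ffun 'I_t -> 'I_m.+1 * 'I_m.+1} | [forall k, s k \in edges e])
     dot (traj (v - vbar v) s) (traj (v - vbar v) s)) / N ^+ t.
Proof.
rewrite /exp_sqdist; congr (_ / _); apply: eq_bigr => s _.
by rewrite sqr_norm2 trajB traj_const.
Qed.

Variable lam : R.
Hypotheses (rayleigh : forall y, sumv y = 0 -> lam * dot y y <= energy e y)
  (lam_gt0 : 0 < lam) (lam_le : lam / 2 <= N).
Local Notation rate := (1 - lam / (2 * N)).

Lemma edges_gt0 : 0 < N.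
Proof. by rewrite (lt_le_trans _ lam_le) // divr_gt0. Qed.

Lemma rateE : rate = (N - lam / 2) / N.
Proof. by field; rewrite gt_eqF // edges_gt0. Qed.

Lemma rate_ge0 : 0 <= rate.
Proof. by rewrite rateE divr_ge0 ?subr_ge0 // ltW // edges_gt0. Qed.

Lemma rate_le1 : rate <= 1.
Proof. by rewrite gerBl divr_ge0 ?mulr_ge0 // ltW. Qed.

Lemma sqrt_exp_sqdist_le t v :
  Num.sqrt (exp_sqdist e t v) <= rate `^ (t%:R / 2) * norm2 (vbar v - v).
Proof.
rewrite exp_sqdistE powR_half ?rate_ge0 // norm2E -[vbar v - v]opprB dotNl dotNr opprK.
rewrite -sqrtrM ?exprn_ge0 ?rate_ge0 // ler_wsqrtr // rateE expr_div_n mulrAC.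
rewrite ler_wpM2r ?invr_ge0 ?exprn_ge0 //.
exact: sum_sqnorm_traj_le (sumv_sub_vbar v).
Qed.

Lemma sqrt_exp_sqdist_le_norm2 t v : Num.sqrt (exp_sqdist e t v) <= norm2 v.
Proof.
apply: le_trans (sqrt_exp_sqdist_le t v) _; rewrite -[leRHS]mul1r.
apply: ler_pM; rewrite ?powR_ge0 ?norm2_sub_vbar_le ?sqrtr_ge0 //.
by rewrite powR_half ?rate_ge0 // -[leRHS]sqrtr1 ler_wsqrtr // exprn_ile1 ?rate_ge0 ?rate_le1.
Qed.

Lemma sqrt_exp_sqdist_eigen_ge t x :
  L *m x = lam *: x -> sumv x = 0 -> dot x x = 1 ->
  rate ^+ t <= Num.sqrt (exp_sqdist e t x).
Proof.
move=> Lx sx x1; rewrite exp_sqdistE vbar_sumv0 // subr0.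
have := dot_sum_le (fun s : {ffun 'I_t -> 'I_m.+1 * 'I_m.+1} => [forall k, s k \in edges e])
  (traj x); rewrite (sum_traj_eigen sym_e irr_e t Lx) dotZl dotZr x1 mulr1.
rewrite card_ffun_in natrX -expr2; set M := \sum_(s | _) _ => CS.
rewrite -[leLHS]ger0_norm ?exprn_ge0 ?rate_ge0 // -sqrtr_sqr ler_wsqrtr //.
rewrite rateE expr_div_n expr_div_n ler_pdivrMr ?exprn_gt0 ?edges_gt0 //.
by rewrite (_ : M / N ^+ t * _ = N ^+ t * M) //; field; rewrite gt_eqF ?exprn_gt0 ?edges_gt0.
Qed.

End ExpectedSquaredDistance.

Local Open Scope classical_set_scope.

Theorem theorem3 (R : realType) (n : nat) (e : rel 'I_n)
  (Hn : (1 < n)%N) (esym : symmetric e) (eirr : irreflexive e)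
  (conn : forall i j : 'I_n, connect e i j)
  (lam : R) (Hlam : is_lambda2 (laplacian R e) lam) :
  let gamma : R := #|edges e|%:R / lam in
  (forall (v0 : 'cV[R]_n) (t : nat),
     Num.sqrt (exp_sqdist e t v0)
       <= (1 - 1 / (2 * gamma)) `^ (t%:R / 2) * norm2 (vbar v0 - v0)) /\
  (forall t : nat,
     (1 - 1 / (2 * gamma)) `^ t%:R
       <= sup [set Num.sqrt (exp_sqdist e t v0) | v0 in [set v : 'cV[R]_n | norm2 v = 1]]).
Proof.
case: n e Hn esym eirr conn Hlam => [//|m] e m_gt0 esym eirr conn [s [s_sorted _ char_L ->]].
have rayleigh := laplacian_rayleigh esym eirr conn s_sorted char_L.
have lam_gt0 := laplacian_lambda2_gt0 esym eirr conn s_sorted char_L m_gt0.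
have [x [Lx sx x1]] := fiedler_vector esym eirr conn s_sorted char_L m_gt0.
have lam_le := rayleigh_le_edges esym eirr Lx x1.
rewrite /= mul1r invfM invf_div mulrCA -invfM.
split => [v t|t]; first exact: sqrt_exp_sqdist_le.
rewrite powR_mulrn ?rate_ge0 //.
apply: le_trans (sqrt_exp_sqdist_eigen_ge esym eirr lam_gt0 lam_le t Lx sx x1) _.
apply: ub_le_sup; last by exists x => //; rewrite /= norm2E x1 sqrtr1.
by exists 1 => _ [v /= v1 <-]; rewrite -v1 (sqrt_exp_sqdist_le_norm2 rayleigh lam_gt0 lam_le).
Qed.
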